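(* Suppose the Boolean algebra $B$ is complete. Let $W$ be a CFG-space over $B$, let $U,V\subset W$ be arbitrary subsets, and let $F:U\to V$ be a contractive map. Then there is a contractive map $F':W\to W$ whose restriction to $U$ is $F$.
   Context: A Boolean metric space over a Boolean algebra $B$ is a set $X$ with a symmetric map $d:X\times X\to B$ such that $d(x,y)=0$ iff $x=y$, and $d(x,z)\le d(x,y)\vee d(y,z)$. A map is contractive if $d(f(x),f(y))\le d(x,y)$ for all $x,y$. A partition of $B$ is a finite family of pairwise disjoint elements with supremum $1$. Given $x_0,\dots,x_n\in X$ and a partition $a_0,\dots,a_n$, $x\in X$ is a convex combination of them with these coefficients if $a_i\wedge d(x,x_i)=0$ for all $i$. $X$ is convex if such a convex combination exists in $X$ for every choice of points and partition; finitely generated if some finite $S\subset X$ has every element of $X$ as a convex combination of elements of $S$. A CFG-space is a convex, finitely generated Boolean metric space. $B$ is complete if every subset of $B$ has a supremum. *)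

(* A Boolean algebra is a ctbDistrLatticeType
   (complemented distributive lattice with top and bottom). *)
From HB Require Import structures.
From mathcomp Require Import all_boot all_order.
Set Implicit Arguments. Unset Strict Implicit. Unset Printing Implicit Defensive.
Import Order.TTheory.
Local Open Scope order_scope.

Section BoolMetric.
Context {disp : Order.disp_t} {B : ctbDistrLatticeType disp}.

Definition complete_BA : Prop :=
  forall P : B -> Prop, exists s : B,
    (forall x, P x -> x <= s) /\
    (forall u, (forall x, P x -> x <= u) -> s <= u).

Definition is_bmetric {X : Type} (d : X -> X -> B) : Prop :=
  (forall x y, d x y = d y x) /\
  (forall x y, d x y = \bot <-> x = y) /\
  (forall x y z, d x z <= d x y `|` d y z).

Definition contractive {X Y : Type} (dX : X -> X -> B) (dY : Y -> Y -> B)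
  (f : X -> Y) : Prop :=
  forall x y, dY (f x) (f y) <= dX x y.

Definition is_partition (n : nat) (a : 'I_n.+1 -> B) : Prop :=
  (forall i j : 'I_n.+1, i != j -> a i `&` a j = \bot) /\
  \join_(i < n.+1) a i = \top.

Definition convex_comb {X : Type} (d : X -> X -> B) (x : X)
  (n : nat) (pts : 'I_n.+1 -> X) (a : 'I_n.+1 -> B) : Prop :=
  forall i, a i `&` d x (pts i) = \bot.

Definition bconvex {X : Type} (d : X -> X -> B) : Prop :=
  forall (n : nat) (pts : 'I_n.+1 -> X) (a : 'I_n.+1 -> B),
    is_partition a -> exists x, convex_comb d x pts a.

Definition fin_generated {X : Type} (d : X -> X -> B) : Prop :=
  exists (m : nat) (S : 'I_m -> X), forall x : X,
    exists (n : nat) (pts : 'I_n.+1 -> X) (a : 'I_n.+1 -> B),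
      (forall i, exists j, pts i = S j) /\ is_partition a /\ convex_comb d x pts a.

Definition CFG_space {X : Type} (d : X -> X -> B) : Prop :=
  is_bmetric d /\ bconvex d /\ fin_generated d.

End BoolMetric.

(* Let W be a convex Boolean metric space generated by S_0, ..., S_m and let
   G be contractive on a set A.  The proof has two independent halves.

   1. One-point extension (uses completeness).  For a point p, let e_i be the
      largest region c on which S_i is an admissible image of p, i.e.
      c `&` d(S_i, G b) <= d(p, b) for all b in A.  These regions cover B, so
      after making them disjoint, the convex combination y of the S_i with
      these coefficients satisfies d(y, G b) <= d(p, b); setting G p := y
      keeps G contractive.  Iterating over the generators extends G from U
      to U together with all S_i.

   2. Convex extension.  Once G is contractive on a set containing every
      generator, send x = sum_i a_i S_(j_i) to sum_i a_i G(S_(j_i)).  This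
      map is contractive and, by uniqueness of convex combinations, agrees
      with G where G was already defined. *)

From HB Require Import structures.
From mathcomp Require Import all_boot all_order.
From Stdlib Require Import Classical ClassicalEpsilon ProofIrrelevance.
Set Implicit Arguments. Unset Strict Implicit. Unset Printing Implicit Defensive.
Import Order.Theory.
Local Open Scope order_scope.

Section BooleanAlgebra.
Context {disp : Order.disp_t} {B : ctbDistrLatticeType disp}.
Implicit Types x y z w : B.

Lemma meet_leE x y z : (x `&` y <= z) = (x <= ~` y `|` z).
Proof. by rewrite -leBLR diffE complK. Qed.

Lemma cover_le n (a : 'I_n -> B) z w :
  \join_(i < n) a i = \top -> (forall i, a i `&` z <= w) -> z <= w.
Proof.
move=> cover_a le_aw.
have : \top <= ~` z `|` w.
  by rewrite -cover_a; apply/joinsP => i _; rewrite -meet_leE le_aw.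
by rewrite -meet_leE meet1x.
Qed.

Definition disjointed (f : nat -> B) (i : nat) : B :=
  f i `\` \join_(k < i) f k.

Lemma disjointed_le f i : disjointed f i <= f i.
Proof. exact: leBx. Qed.

Lemma join_disjointed f n : \join_(i < n) disjointed f i = \join_(i < n) f i.
Proof.
elim: n => [|n IH]; first by rewrite !big_ord0.
by rewrite !big_ord_recr /= IH /disjointed joinxB meetxx leBUK // leUl.
Qed.

Lemma disjointed_disj f i j :
  (i < j)%N -> disjointed f i `&` disjointed f j = \bot.
Proof.
move=> lt_ij.
have le_i_prefix : disjointed f i <= \join_(k < j) f k.
  by apply: (@joins_min _ _ _ (Ordinal lt_ij)) => //; exact: disjointed_le.
by rewrite -(meet_l le_i_prefix) meetIB.
Qed.

Lemma cover_refine n (e : 'I_n.+1 -> B) :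
  \join_(i < n.+1) e i = \top ->
  exists e' : 'I_n.+1 -> B, is_partition e' /\ forall i, e' i <= e i.
Proof.
move=> cover_e; pose f k := e (inord k).
have f_val (i : 'I_n.+1) : f i = e i by rewrite /f inord_val.
exists (fun i => disjointed f i); split; last by move=> i; rewrite -f_val disjointed_le.
split.
  move=> i j; rewrite neq_ltn => /orP [] lt_ij; first exact: disjointed_disj.
  by rewrite meetC; apply: disjointed_disj.
rewrite (join_disjointed f n.+1) -cover_e.
by apply: eq_bigr => i _; rewrite f_val.
Qed.

End BooleanAlgebra.

Section BooleanMetric.
Context {disp : Order.disp_t} {B : ctbDistrLatticeType disp}.
Variables (W : Type) (d : W -> W -> B).
Hypothesis d_metric : is_bmetric d.

Lemma dist_sym x y : d x y = d y x. Proof. exact: d_metric.1. Qed.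
Lemma dist_triangle x y z : d x z <= d x y `|` d y z. Proof. exact: d_metric.2.2. Qed.
Lemma dist_eq0 x y : d x y = \bot -> x = y. Proof. exact: (d_metric.2.1 x y).1. Qed.
Lemma dist_xx x : d x x = \bot. Proof. exact: (d_metric.2.1 x x).2. Qed.

Lemma dist_agree c x y z : c `&` d x y = \bot -> c `&` d y z = c `&` d x z.
Proof.
suff le_agree u v : c `&` d u v = \bot -> c `&` d v z <= c `&` d u z.
  by move=> cxy; apply/le_anti/andP; split; apply: le_agree; rewrite // dist_sym.
move=> cuv; apply: le_trans (leI2 (le_refl c) (dist_triangle v u z)) _.
by rewrite meetUr [d v u]dist_sym cuv join0x.
Qed.

(* To bound the distance from a convex combination to z, it suffices to bound
   it on each coefficient region, where the combination coincides with a point. *)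
Lemma comb_dist_le n (pts : 'I_n.+1 -> W) (a : 'I_n.+1 -> B) y z w :
  is_partition a -> convex_comb d y pts a ->
  (forall i, a i `&` d (pts i) z <= w) -> d y z <= w.
Proof.
move=> a_part y_comb le_w; apply: (cover_le a_part.2) => i.
by rewrite -(dist_agree _ (y_comb i)).
Qed.

Lemma comb_unique n (pts : 'I_n.+1 -> W) (a : 'I_n.+1 -> B) x y :
  is_partition a -> convex_comb d x pts a -> convex_comb d y pts a -> x = y.
Proof.
move=> a_part x_comb y_comb; apply: dist_eq0; apply/eqP; rewrite -lex0.
by apply: (comb_dist_le a_part x_comb) => i; rewrite dist_sym y_comb.
Qed.

Definition contractive_on (A : W -> Prop) (G : W -> W) : Prop :=
  forall x y, A x -> A y -> d (G x) (G y) <= d x y.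

Definition generated_by m (S : 'I_m -> W) : Prop :=
  forall x, exists n (pts : 'I_n.+1 -> W) (a : 'I_n.+1 -> B),
    (forall i, exists j, pts i = S j) /\ is_partition a /\ convex_comb d x pts a.

Lemma contractive_on_sub (A A' : W -> Prop) G :
  (forall x, A' x -> A x) -> contractive_on A G -> contractive_on A' G.
Proof. by move=> sub_A G_contr x y /sub_A Ax /sub_A Ay; apply: G_contr. Qed.

Hypothesis d_convex : bconvex d.

(* Second half: a map contractive on a set containing all generators extends
   to a contractive self-map of W, by mapping convex combinations to convex
   combinations with the same coefficients. *)
Lemma convex_extension m (S : 'I_m -> W) (A : W -> Prop) G :
  generated_by S -> (forall j, A (S j)) -> contractive_on A G ->
  exists F, contractive d d F /\ forall x, A x -> F x = G x.
Proof.
move=> S_gen A_S G_contr.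
(* The image of x: same coefficients as x, generators replaced by their images. *)
have image_ex x : exists y (n : nat) (pts : 'I_n.+1 -> W) (a : 'I_n.+1 -> B),
    [/\ forall i, A (pts i), is_partition a, convex_comb d x pts a
       & convex_comb d y (fun i => G (pts i)) a].
  have [n [pts [a [pts_S [a_part x_comb]]]]] := S_gen x.
  have [y y_comb] := d_convex (fun i => G (pts i)) a_part.
  exists y, n, pts, a; split => // i; have [j ->] := pts_S i; exact: A_S.
have [F F_spec] := ClassicalEpsilon.choice _ image_ex.
exists F; split.
  move=> x x'.
  have [n [pts [a [A_pts a_part x_comb Fx_comb]]]] := F_spec x.
  have [n' [pts' [b [A_pts' b_part x'_comb Fx'_comb]]]] := F_spec x'.
  (* On a i `&` b j, the points F x, F x', x, x' coincide with G (pts i),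
     G (pts' j), pts i, pts' j, and G is contractive on the latter. *)
  apply: (cover_le a_part.2) => i; apply: (cover_le b_part.2) => j.
  rewrite -(dist_agree _ (Fx_comb i)) [d _ (F x')]dist_sym meetCA.
  rewrite -(dist_agree _ (Fx'_comb j)).
  apply: le_trans (leI2 (le_refl _) (leI2 (le_refl _) (G_contr _ _ (A_pts' j) (A_pts i)))) _.
  rewrite (dist_agree _ (x'_comb j)) [d x' _]dist_sym meetCA (dist_agree _ (x_comb i)).
  exact: leIxr (leIr _ _).
move=> x Ax; have [n [pts [a [A_pts a_part x_comb Fx_comb]]]] := F_spec x.
(* G x is itself a combination of the G (pts i) with coefficients a. *)
apply: (comb_unique a_part Fx_comb) => i.
by apply/eqP; rewrite -lex0 -(x_comb i) leI2 // G_contr.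
Qed.

Hypothesis B_complete : complete_BA (B := B).

Lemma one_point m (S : 'I_m.+1 -> W) (A : W -> Prop) G p :
  generated_by S -> contractive_on A G ->
  exists y, forall b, A b -> d y (G b) <= d p b.
Proof.
move=> S_gen G_contr.
(* c is admissible for i when S i may serve as image of p on region c. *)
pose admissible i c := forall b, A b -> c `&` d (S i) (G b) <= d p b.
(* e i is the largest admissible region for i. *)
have [e e_sup] := fin_all_exists (fun i => B_complete (admissible i)).
have e_adm i : admissible i (e i).
  move=> b Ab; rewrite meet_leE; apply: (e_sup i).2 => c c_adm.
  by rewrite -meet_leE; apply: c_adm.
have [Q [Q_ub Q_least]] := B_complete (fun c => exists2 a, A a & c = ~` d p a).
(* Where p is far from every point of A (outside Q), anything is admissible. *)
have far_adm i : admissible i (~` Q).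
  by move=> b Ab; apply: leIxl; rewrite leCx; apply: Q_ub; exists b.
(* Where S j coincides with G a, the part near a is admissible. *)
have near_adm j a c :
    A a -> c `&` d (S j) (G a) = \bot -> admissible j (c `&` ~` d p a).
  move=> Aa c_agree b Ab; rewrite meetAC -(dist_agree _ c_agree).
  apply: le_trans (leI2 (leIxr _ (G_contr _ _ Aa Ab)) (le_refl _)) _.
  by rewrite meet_leE complK [d p a]dist_sym dist_triangle.
(* The maximal admissible regions cover B: the near parts cover Q. *)
have cover_e : \join_(i < m.+1) e i = \top.
  apply/eqP; rewrite -le1x -(joinxC Q) leUx; apply/andP; split.
    apply: Q_least => _ [a Aa ->].
    have [n [pts [c [pts_S [c_part Ga_comb]]]]] := S_gen (G a).
    apply: (cover_le c_part.2) => k; have [j pts_j] := pts_S k.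
    apply: le_trans (_ : e j <= _); last exact: (@joins_min _ _ _ j).
    by apply: (e_sup j).1; apply: (near_adm j a) => //; rewrite -pts_j dist_sym.
  apply: le_trans (_ : e ord0 <= _); last exact: (@joins_min _ _ _ ord0).
  exact: (e_sup ord0).1 (far_adm ord0).
have [e' [e'_part e'_le]] := cover_refine cover_e.
have [y y_comb] := d_convex S e'_part.
exists y => b Ab; apply: (comb_dist_le e'_part y_comb) => i.
exact: le_trans (leI2 (e'_le i) (le_refl _)) (e_adm i b Ab).
Qed.

Lemma extend_one m (S : 'I_m.+1 -> W) (A : W -> Prop) G p :
  generated_by S -> contractive_on A G ->
  exists G', contractive_on (fun x => A x \/ x = p) G' /\
             forall x, A x -> G' x = G x.
Proof.
move=> S_gen G_contr; case: (classic (A p)) => [Ap|nAp].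
  by exists G; split => //; apply: contractive_on_sub G_contr => x [|->].
have [y y_near] := one_point p S_gen G_contr.
pose G' x := if excluded_middle_informative (x = p) then y else G x.
have G'p : G' p = y by rewrite /G'; case: excluded_middle_informative.
have G'A x : A x -> G' x = G x.
  move=> Ax; rewrite /G'; case: excluded_middle_informative => // xp.
  by case: nAp; rewrite -xp.
exists G'; split => // x z [Ax|->] [Az|->].
- by rewrite !G'A //; apply: G_contr.
- by rewrite G'p G'A // dist_sym [d x p]dist_sym; apply: y_near.
- by rewrite G'p G'A //; apply: y_near.
- by rewrite dist_xx le0x.
Qed.

Lemma extend_list m (S : 'I_m.+1 -> W) (A : W -> Prop) G (l : seq W) :
  generated_by S -> contractive_on A G ->
  exists G', contractive_on (fun x => A x \/ List.In x l) G' /\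
             forall x, A x -> G' x = G x.
Proof.
move=> S_gen G_contr; elim: l => [|p l [G' [G'_contr G'_A]]].
  by exists G; split => //; apply: contractive_on_sub G_contr => x [|[]].
have [G'' [G''_contr G''_A]] := extend_one p S_gen G'_contr.
exists G''; split; last by move=> x Ax; rewrite G''_A ?G'_A //; left.
apply: contractive_on_sub G''_contr => x [Ax|[->|xl]]; by [left; left|right|left; right].
Qed.

End BooleanMetric.

Lemma mem_In (T : eqType) (x : T) (s : seq T) : x \in s -> List.In x s.
Proof. by elim: s => //= y s IH; rewrite in_cons => /predU1P [->|/IH]; [left|right]. Qed.

Lemma total_extension (T : Type) (U : T -> Prop) (f : {x : T | U x} -> T) :
  exists g : T -> T, forall x : {x : T | U x}, g (proj1_sig x) = f x.
Proof.
have g_ex x : exists y, forall Ux : U x, y = f (exist U x Ux).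
  case: (classic (U x)) => [Ux|nUx]; last by exists x => Ux; case: nUx.
  by exists (f (exist U x Ux)) => Ux'; rewrite (proof_irrelevance _ Ux Ux').
have [g g_spec] := ClassicalEpsilon.choice _ g_ex.
by exists g => -[x Ux]; apply: g_spec.
Qed.

Theorem theorem4 (disp : Order.disp_t) (B : ctbDistrLatticeType disp)
  (W : Type) (d : W -> W -> B)
  (U V : W -> Prop) (F : {x : W | U x} -> {y : W | V y}) :
  complete_BA (B := B) ->
  CFG_space d ->
  contractive (fun x y : {x : W | U x} => d (proj1_sig x) (proj1_sig y))
              (fun x y : {y : W | V y} => d (proj1_sig x) (proj1_sig y)) F ->
  exists F' : W -> W, contractive d d F' /\
    (forall x : {x : W | U x}, F' (proj1_sig x) = proj1_sig (F x)).
Proof.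
move=> B_complete [d_metric [d_convex [m [S S_gen]]]] F_contr.
(* Without generators W is empty. *)
case: m S S_gen => [|m] S S_gen.
  exists id; split => [x y //|[x Ux]].
  by have [n [pts [a [pts_S _]]]] := S_gen x; have [[]] := pts_S ord0.
(* Extend G0 = F contractively to U and all generators, then convexly to W. *)
have [G0 G0_F] := total_extension (fun x => proj1_sig (F x)).
have G0_contr : contractive_on d U G0.
  move=> x y Ux Uy; have := F_contr (exist U x Ux) (exist U y Uy).
  by rewrite -!G0_F.
pose l := List.map S (enum 'I_m.+1).
have [G [G_contr G_G0]] := extend_list d_metric d_convex B_complete l S_gen G0_contr.
have [F' [F'_contr F'_G]] := convex_extension d_metric d_convex S_gen
  (fun j => or_intror (List.in_map S _ j (mem_In (mem_enum _ j)))) G_contr.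
exists F'; split => // -[x Ux] /=.
by rewrite F'_G; [rewrite G_G0 // -(G0_F (exist U x Ux)) | left].
Qed.
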